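(* Let $A,B\in\mathbb{R}^{n\times n}$ satisfy $\mathrm{rank}(A-B)=\mathrm{rank}(A)-\mathrm{rank}(B)$, $A+A^T>0$ (positive definite) and $B+B^T\ge0$ (positive semidefinite). Then $\ker B=\ker(B+B^T)$. *)

From HB Require Import structures.
From mathcomp Require Import all_boot all_order all_algebra.
Set Implicit Arguments. Unset Strict Implicit. Unset Printing Implicit Defensive.
Import Order.TTheory GRing.Theory Num.Theory.
Local Open Scope ring_scope.

Definition posdef (R : realFieldType) (n : nat) (M : 'M[R]_n) : Prop :=
  forall x : 'cV[R]_n, x != 0 -> 0 < (x^T *m M *m x) 0 0.

Definition psd (R : realFieldType) (n : nat) (M : 'M[R]_n) : Prop :=
  forall x : 'cV[R]_n, 0 <= (x^T *m M *m x) 0 0.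

Definition ker_mx (R : realFieldType) (n : nat) (M : 'M[R]_n) : 'cV[R]_n -> Prop :=
  fun x => M *m x = 0.

From HB Require Import structures.
From mathcomp Require Import all_boot all_order all_algebra.
From mathcomp Require Import lra zify.
Set Implicit Arguments. Unset Strict Implicit. Unset Printing Implicit Defensive.
Import Order.TTheory GRing.Theory Num.Theory.
Local Open Scope ring_scope.

(* Write S := B + B^T.  Since x^T S x = 2 x^T B x and S is symmetric positive
   semidefinite, ker B is contained in ker S.  Conversely let S x = 0 and
   v := A^-1 B x.  Then B (x - v) = (A - B) v lies in the column spaces of both
   B and A - B, which meet trivially because their ranks add up to rank A; so
   B x = B v and x - v is in ker B, hence in ker S, whence S v = 0.  Therefore
   v^T (A + A^T) v = 2 v^T B v = v^T S v = 0, so v = 0 and B x = A v = 0. *)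

Lemma dotmxC (R : comPzRingType) (n : nat) (p q : 'cV[R]_n) :
  (p^T *m q) 0 0 = (q^T *m p) 0 0.
Proof. by rewrite -[in LHS](trmxK (p^T *m q)) trmx_mul trmxK mxE. Qed.

Lemma dotmx_self_eq0 (R : realFieldType) (n : nat) (w : 'cV[R]_n) :
  (w^T *m w) 0 0 = 0 -> w = 0.
Proof.
have wTw_ge0 : forall k : 'I_n, true -> 0 <= w^T 0 k * w k 0.
  by move=> k _; rewrite mxE -expr2 sqr_ge0.
rewrite mxE => /(psumr_eq0P wTw_ge0) wTw0.
apply/matrixP => i j; rewrite (ord1 j) mxE.
by have /eqP := wTw0 i isT; rewrite mxE mulf_eq0 orbb => /eqP.
Qed.

Lemma quad_form_symmetrize (R : comPzRingType) (n : nat) (M : 'M[R]_n)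
    (x : 'cV[R]_n) :
  (x^T *m (M + M^T) *m x) 0 0 = (x^T *m (M *m x)) 0 0 *+ 2.
Proof.
rewrite mulmxDr mulmxDl mxE -trmx_mul -mulmxA [X in _ + X = _]dotmxC.
by rewrite mulr2n.
Qed.

Lemma nonneg_quadratic_linear_coef0 (R : realFieldType) (a b : R) :
  0 <= a -> (forall t, 0 <= a * t ^+ 2 + 2 * b * t) -> b = 0.
Proof.
move=> a_ge0 nonneg.
have c_gt0 : 0 < (a + 1)^-1 by rewrite invr_gt0; lra.
set c := (a + 1)^-1 in c_gt0.
have c_inv : c * (a + 1) = 1 by rewrite /c mulVf //; apply/eqP; lra.
(* At t := - b c the quadratic equals b^2 c (a c - 2), and a c - 2 < 0. *)
have := nonneg (- b * c) => value_ge0.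
have b2c_le0 : b ^+ 2 * c <= 0 by nra.
have : b ^+ 2 <= 0 by nra.
nra.
Qed.

(* Expand (z + t w)^T S (z + t w) >= 0 with w := S z: the linear coefficient
   in t is 2 |S z|^2, which must vanish. *)
Lemma psd_quad_form_eq0 (R : realFieldType) (n : nat) (S : 'M[R]_n)
    (z : 'cV[R]_n) :
  S^T = S -> psd S -> (z^T *m S *m z) 0 0 = 0 -> S *m z = 0.
Proof.
move=> S_sym S_psd zSz0; set w := S *m z.
have wSz : (w^T *m S *m z) 0 0 = (w^T *m w) 0 0 by rewrite -mulmxA.
have zSw : (z^T *m S *m w) 0 0 = (w^T *m w) 0 0.
  by rewrite -wSz -mulmxA dotmxC trmx_mul S_sym.
apply/dotmx_self_eq0/(nonneg_quadratic_linear_coef0 (S_psd w)) => t.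
have := S_psd (z + t *: w).
have -> : (z + t *: w)^T = z^T + t *: w^T by rewrite linearD linearZ.
rewrite !mulmxDl !mulmxDr -!scalemxAl -!scalemxAr.
rewrite ![(_ + _ : 'M_1) 0 0]mxE ![(_ *: _ : 'M_1) 0 0]mxE zSz0 zSw wSz; nra.
Qed.

Lemma psd_symmetrize_ker (R : realFieldType) (n : nat) (B : 'M[R]_n)
    (x : 'cV[R]_n) :
  psd (B + B^T) -> B *m x = 0 -> (B + B^T) *m x = 0.
Proof.
move=> B_psd Bx0; apply: psd_quad_form_eq0 => //.
  by rewrite linearD /= trmxK addrC.
by rewrite quad_form_symmetrize Bx0 mulmx0 mxE mul0rn.
Qed.

Lemma posdef_symmetrize_unitmx (R : realFieldType) (n : nat) (A : 'M[R]_n) :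
  posdef (A + A^T) -> A \in unitmx.
Proof.
move=> A_pd; rewrite unitmxE unitfE -det_tr.
apply/negP => /det0P [v v_neq0 vA0].
have Av0 : A *m v^T = 0 by rewrite -(trmxK A) -trmx_mul vA0 trmx0.
have := A_pd v^T; rewrite trmx_eq0 v_neq0 => /(_ isT).
by rewrite quad_form_symmetrize Av0 mulmx0 mxE mul0rn ltxx.
Qed.

Lemma rank_add_capmx_tr_eq0 (R : fieldType) (m n : nat) (B C : 'M[R]_(m, n)) :
  \rank (B + C)%R = (\rank B + \rank C)%N -> (B^T :&: C^T)%MS == 0.
Proof.
move=> rankBC; rewrite -mxrank_eq0.
have := mxrank_sum_cap B^T C^T; rewrite !mxrank_tr.
have : (\rank (B + C)%R^T <= \rank (B^T + C^T)%MS)%N.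
  by rewrite linearD /=; apply/mxrankS/addmx_sub_adds.
rewrite mxrank_tr rankBC; lia.
Qed.

Lemma rank_add_mulmx_eq (R : fieldType) (m n k : nat) (B C : 'M[R]_(m, n))
    (p q : 'M[R]_(n, k)) :
  \rank (B + C)%R = (\rank B + \rank C)%N -> B *m p = C *m q -> B *m p = 0.
Proof.
move=> /rank_add_capmx_tr_eq0 /eqP capBC0 BpCq.
apply: trmx_inj; rewrite trmx0; apply/eqP; rewrite -submx0 -capBC0 sub_capmx.
by rewrite {2}BpCq !trmx_mul !submxMl.
Qed.

Theorem lemma3 (R : realFieldType) (n : nat) (A B : 'M[R]_n)
  (hrank : (\rank (A - B))%:Z = (\rank A)%:Z - (\rank B)%:Z)
  (hA : posdef (A + A^T)) (hB : psd (B + B^T)) :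
  forall x : 'cV[R]_n, ker_mx B x <-> ker_mx (B + B^T) x.
Proof.
move=> x; rewrite /ker_mx; split; first exact: psd_symmetrize_ker.
move=> Sx0; set v := invmx A *m (B *m x).
have Av : A *m v = B *m x by rewrite mulKVmx ?posdef_symmetrize_unitmx.
have rank_add : \rank (B + (A - B))%R = (\rank B + \rank (A - B)%R)%N.
  by rewrite addrC subrK; lia.
have /(rank_add_mulmx_eq rank_add) Bxv0 : B *m (x - v) = (A - B) *m v.
  by rewrite mulmxBr mulmxBl Av.
have Bv : B *m v = B *m x by apply/esym/subr0_eq; rewrite -mulmxBr.
have Sv0 : (B + B^T) *m v = 0.
  by rewrite -[v](subKr x) mulmxBr (psd_symmetrize_ker hB Bxv0) Sx0 subr0.
have : (v^T *m (A + A^T) *m v) 0 0 = 0.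
  by rewrite quad_form_symmetrize Av -Bv -quad_form_symmetrize -mulmxA Sv0
    mulmx0 mxE.
have [v0 _|/hA vAv_gt0] := eqVneq v 0; first by rewrite -Av v0 mulmx0.
by move=> vAv0; move: vAv_gt0; rewrite vAv0 ltxx.
Qed.
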